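(* Let $\langle (x_n,y_n)\rangle_{n\in\mathbb{N}}$ be the solutions in $\mathbb{N}^2$ of $x^2-19\,y^2=1$, indexed so that $y_0<y_1<\cdots$. Suppose $n>0$ is not a power of $2$ and $y_n/39$ is representable. Then the system \[\begin{cases} X^2-19\cdot 39^2\, Y^2 = 1,\\ X+13^2\, Y = r^2+r\,s+5\,s^2,\\ X+19\cdot 3^2\, Y = v^2+v\,u+5\,u^2,\\ Y>0\end{cases}\] has a solution $\bar X,\bar Y,\bar r,\bar s,\bar v,\bar u\in\mathbb{Z}$ such that $\bar r\neq\pm1$ or $\bar s\neq 0$, and moreover $39\,(\bar X+13^2\bar Y)\,(\bar X+19\cdot 3^2\,\bar Y)\mid y_n$.
   Context: $(x_0,y_0)=(1,0)$, $(x_1,y_1)=(170,39)$, $x_n+y_n\sqrt{19}=(170+39\sqrt{19})^n$; note $39\mid y_k$ for all $k$. A non-negative integer $N$ is called representable if $N=w^2+w\,t+5\,t^2$ for some $w,t\in\mathbb{Z}$. *)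

From Stdlib Require Import ZArith.
Open Scope Z_scope.

(* (x_n, y_n) with x_n + y_n sqrt 19 = (170 + 39 sqrt 19)^n, i.e. the
   n-th non-negative solution of x^2 - 19 y^2 = 1 (increasing in y). *)
Fixpoint pell19 (n : nat) : Z * Z :=
  match n with
  | O => (1, 0)
  | S m => let '(x, y) := pell19 m in (170 * x + 19 * 39 * y, 39 * x + 170 * y)
  end.

Definition xs (n : nat) : Z := fst (pell19 n).
Definition ys (n : nat) : Z := snd (pell19 n).

Definition representable (N : Z) : Prop :=
  0 <= N /\ exists w t : Z, N = w ^ 2 + w * t + 5 * t ^ 2.

Definition is_pow2 (n : nat) : Prop := exists k : nat, n = Nat.pow 2 k.

From Stdlib Require Import ZArith Znumtheory Zwf Lia.
Open Scope Z_scope.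

(* Write [zs n = ys n / 39] and [n = 2^a * (2k+1)] with [k > 0]
   (this is where "n is not a power of 2" enters).  The addition law of the
   Pell solutions gives, with [X = xs k] and [Y = zs k],
       zs (2k+1) = (X + 169 Y) (X + 171 Y),     zs (2h) = 2 xs h zs h,
   and [X^2 - 19*39^2 Y^2 = 1].  Iterating the doubling formula shows
   [zs n = zs (2k+1) * C] with [C] coprime to the odd number [zs (2k+1)];
   the two factors [X + 169 Y] and [X + 171 Y] are coprime as well.
   Finally the form [r^2 + r s + 5 s^2] is the only reduced positive form of
   discriminant [-19]; hence every positive divisor [A] of a represented number
   [A * B] with [A] coprime to [B] is itself represented.  Applied to the
   representable number [zs n], this yields [r, s, v, u]. *)

Lemma xs_succ k : xs (S k) = 170 * xs k + 19 * 39 * ys k.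
Proof. unfold xs, ys; simpl; destruct (pell19 k); reflexivity. Qed.

Lemma ys_succ k : ys (S k) = 39 * xs k + 170 * ys k.
Proof. unfold xs, ys; simpl; destruct (pell19 k); reflexivity. Qed.

(* Addition law: (xs, ys) is the exponential of 170 + 39 sqrt 19. *)
Lemma pell19_add a b :
  xs (a + b) = xs a * xs b + 19 * ys a * ys b /\
  ys (a + b) = xs a * ys b + ys a * xs b.
Proof.
  induction b as [|b [IHx IHy]].
  - rewrite Nat.add_0_r. cbn [xs ys pell19 fst snd]. split; ring.
  - rewrite Nat.add_succ_r, !xs_succ, !ys_succ, IHx, IHy. split; ring.
Qed.

Lemma pell19_norm k : xs k ^ 2 - 19 * ys k ^ 2 = 1.
Proof.
  induction k as [|k IH]; [reflexivity|].
  rewrite xs_succ, ys_succ, <- IH. ring.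
Qed.

Lemma pell19_bounds k : 1 <= xs k /\ 0 <= ys k /\ ((0 < k)%nat -> 39 <= ys k).
Proof.
  induction k as [|k IH]; [cbn; lia|].
  rewrite xs_succ, ys_succ. lia.
Qed.

Lemma pell19_parity k : Z.odd (xs k) = Nat.even k /\ Z.odd (ys k) = Nat.odd k.
Proof.
  induction k as [|k [IHx IHy]]; [split; reflexivity|].
  rewrite xs_succ, ys_succ, Nat.even_succ, Nat.odd_succ, !Z.odd_add, !Z.odd_mul,
    IHx, IHy, <- Nat.negb_even.
  destruct (Nat.even k); split; reflexivity.
Qed.

Lemma ys_div39 k : (39 | ys k).
Proof.
  induction k as [|k [q Hq]]; [exists 0; reflexivity|].
  rewrite ys_succ, Hq. exists (xs k + 170 * q). ring.
Qed.

Definition zs (k : nat) : Z := ys k / 39.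

Lemma ys_zs k : ys k = 39 * zs k.
Proof.
  unfold zs. destruct (ys_div39 k) as [q ->]. rewrite Z.div_mul by lia. ring.
Qed.

Lemma zs_norm k : xs k ^ 2 - 19 * 39 ^ 2 * zs k ^ 2 = 1.
Proof. rewrite <- (pell19_norm k), ys_zs. ring. Qed.

Lemma zs_pos k : (0 < k)%nat -> 1 <= zs k.
Proof. intros Hk. destruct (pell19_bounds k) as [_ [_ H]]. rewrite ys_zs in H. lia. Qed.

Lemma zs_parity k : Z.odd (zs k) = Nat.odd k.
Proof. rewrite <- (proj2 (pell19_parity k)), ys_zs, Z.odd_mul. reflexivity. Qed.

Lemma zs_double h : zs (h + h) = 2 * xs h * zs h.
Proof.
  apply (Z.mul_cancel_l _ _ 39); [lia|].
  rewrite <- ys_zs, (proj2 (pell19_add h h)), ys_zs. ring.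
Qed.

Lemma zs_odd_index k :
  zs (S (k + k)) = (xs k + 13 ^ 2 * zs k) * (xs k + 19 * 3 ^ 2 * zs k).
Proof.
  apply (Z.mul_cancel_l _ _ 39); [lia|].
  destruct (pell19_add k k) as [Hx Hy].
  rewrite <- ys_zs, ys_succ, Hx, Hy, ys_zs. ring.
Qed.

Lemma rel_prime_of_comb2 a b u v : Z.odd a = true -> u * a + v * b = 2 -> rel_prime a b.
Proof.
  intros Hodd Huv. apply Z.odd_spec in Hodd. destruct Hodd as [q Hq].
  apply bezout_rel_prime, (Bezout_intro _ _ _ (1 - q * u) (- q * v)).
  transitivity (a - q * (u * a + v * b)); [ring|]. rewrite Huv. lia.
Qed.

Lemma zs_two_power_descent m a : Z.odd (zs m) = true ->
  exists C, zs (2 ^ a * m) = zs m * C /\ rel_prime (zs m) C.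
Proof.
  intros Hodd. induction a as [|a [C [HC Hcop]]].
  - exists 1. rewrite Nat.pow_0_r, Nat.mul_1_l.
    split; [ring | apply rel_prime_sym, rel_prime_1].
  - set (h := (2 ^ a * m)%nat) in HC.
    replace (2 ^ S a * m)%nat with (h + h)%nat by (unfold h; simpl; lia).
    exists (C * (2 * xs h)). split.
    + rewrite zs_double, HC. ring.
    + apply rel_prime_mult; [exact Hcop|]. apply rel_prime_mult.
      * exact (rel_prime_of_comb2 (zs m) 2 0 1 Hodd ltac:(ring)).
      * (* xs h^2 - 19*39^2 zs h^2 = 1 and zs m divides zs h *)
        apply bezout_rel_prime, (Bezout_intro _ _ _ (- 19 * 39 ^ 2 * C * zs h) (xs h)).
        transitivity (xs h ^ 2 - 19 * 39 ^ 2 * zs h * (zs m * C)); [ring|].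
        rewrite <- HC, <- (zs_norm h). ring.
Qed.

Lemma odd_index_factors_coprime X Y :
  X ^ 2 - 19 * 39 ^ 2 * Y ^ 2 = 1 ->
  Z.odd ((X + 13 ^ 2 * Y) * (X + 19 * 3 ^ 2 * Y)) = true ->
  rel_prime (X + 13 ^ 2 * Y) (X + 19 * 3 ^ 2 * Y).
Proof.
  intros Hnorm Hodd. rewrite Z.odd_mul in Hodd. apply andb_prop in Hodd.
  apply (rel_prime_of_comb2 _ _ (171 * X + 28899 * Y) (- 169 * X - 28899 * Y)).
  - exact (proj1 Hodd).
  - transitivity (2 * (X ^ 2 - 19 * 39 ^ 2 * Y ^ 2)); [ring | rewrite Hnorm; ring].
Qed.

Lemma odd_part_decomposition n : (0 < n)%nat ->
  exists a m, n = (2 ^ a * m)%nat /\ Nat.odd m = true.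
Proof.
  induction n as [n IH] using lt_wf_ind. intros Hn.
  destruct (Nat.even n) eqn:He.
  - apply Nat.even_spec in He. destruct He as [n' ->].
    destruct (IH n' ltac:(lia) ltac:(lia)) as [a [m [-> Hm]]].
    exists (S a), m. split; [simpl; lia | exact Hm].
  - exists 0%nat, n. split; [simpl; lia|]. rewrite <- Nat.negb_even, He. reflexivity.
Qed.

Definition principal_rep (N : Z) : Prop := exists r s : Z, N = r ^ 2 + r * s + 5 * s ^ 2.

(* Class number one: every positive definite form a x^2 + b x y + c y^2 of
   discriminant -19 only takes values of the principal form.  Proof by
   reduction: translate x to get |b| <= a, and swap x, y while c < a. *)
Lemma form_reduction a b c : 0 < a -> b ^ 2 - 4 * a * c = -19 ->
  forall x y, principal_rep (a * x ^ 2 + b * x * y + c * y ^ 2).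
Proof.
  revert b c. induction a as [a IH] using (well_founded_ind (Zwf_well_founded 0)).
  intros b c Ha Hdisc x y.
  set (k := (b + a - 1) / (2 * a)).
  assert (Hk := Z.div_mod (b + a - 1) (2 * a) ltac:(lia)).
  assert (Hr := Z.mod_pos_bound (b + a - 1) (2 * a) ltac:(lia)).
  fold k in Hk.
  set (b' := b - 2 * a * k). set (c' := a * k ^ 2 - b * k + c).
  assert (Hb' : - a < b' <= a) by (unfold b'; lia).
  assert (Hdisc' : b' ^ 2 - 4 * a * c' = -19) by (unfold b', c'; rewrite <- Hdisc; ring).
  replace (a * x ^ 2 + b * x * y + c * y ^ 2)
    with (a * (x + k * y) ^ 2 + b' * (x + k * y) * y + c' * y ^ 2) by (unfold b', c'; ring).
  clearbody b' c'. generalize (x + k * y). intros x'.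
  destruct (Z_lt_ge_dec c' a) as [Hc|Hc].
  - (* the equivalent form c' x^2 - b' x y + a y^2 has smaller leading coefficient *)
    assert (Hc0 : 0 < c') by nia.
    destruct (IH c' ltac:(unfold Zwf; lia) (- b') a Hc0 ltac:(lia) y (- x'))
      as [r [s Hrs]].
    exists r, s. rewrite <- Hrs. ring.
  - (* reduced form: |b'| <= a <= c' forces (a, b', c') = (1, 1, 5) *)
    assert (Ha2 : a <= 2) by nia.
    assert (a = 1 \/ a = 2) as [->| ->] by lia.
    + assert (b' = 0 \/ b' = 1) as [->| ->] by lia; [lia|].
      assert (c' = 5) as -> by lia. exists x', y. ring.
    + exfalso. assert (b' = -1 \/ b' = 0 \/ b' = 1 \/ b' = 2) as [->|[->|[->| ->]]]
        by lia; lia.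
Qed.

Lemma rep_of_divisor A c m : 0 < A -> A * c = m ^ 2 + m + 5 -> principal_rep A.
Proof.
  intros HA H.
  destruct (form_reduction A (2 * m + 1) c HA ltac:(nia) 1 0) as [r [s Hrs]].
  exists r, s. rewrite <- Hrs. ring.
Qed.

(* If A B is represented with A coprime to t, then A divides a value
   m^2 + m + 5 (take m = w v where v inverts t modulo A). *)
Lemma rep_factor_coprime_second A B w t : 0 < A -> rel_prime A t ->
  A * B = w ^ 2 + w * t + 5 * t ^ 2 -> principal_rep A.
Proof.
  intros HA Hcop HAB. destruct (rel_prime_bezout _ _ Hcop) as [u v Huv].
  apply (rep_of_divisor A (v ^ 2 * B + w * v * u + 10 * u - 5 * u ^ 2 * A) (w * v) HA).
  assert (E : A * (v ^ 2 * B + w * v * u + 10 * u - 5 * u ^ 2 * A) - ((w * v) ^ 2 + w * v + 5)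
    = v ^ 2 * (A * B - (w ^ 2 + w * t + 5 * t ^ 2))
      + (w * v + 5 * (v * t + 1 - u * A)) * (u * A + v * t - 1)) by ring.
  rewrite HAB, Huv, !Z.sub_diag, !Z.mul_0_r in E. lia.
Qed.

Lemma exists_prime_divisor n : 1 < n -> exists p, prime p /\ (p | n).
Proof.
  induction n as [n IH] using (well_founded_ind (Zwf_well_founded 0)). intros Hn.
  destruct (prime_dec n) as [Hp|Hp].
  - exists n. split; [exact Hp | apply Z.divide_refl].
  - destruct (not_prime_divide n Hn Hp) as [d [Hd Hdn]].
    destruct (IH d ltac:(unfold Zwf; lia) ltac:(lia)) as [p [Hp' Hpd]].
    exists p. split; [exact Hp' | eapply Z.divide_trans; eauto].
Qed.

(* A prime p dividing both A and t, with A coprime to B and A B = form(w, t),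
   divides w as well, so p^2 | A and the equation descends by p. *)
Lemma prime_square_descent p A B w t : prime p -> (p | A) -> (p | t) -> rel_prime A B ->
  A * B = w ^ 2 + w * t + 5 * t ^ 2 ->
  exists A1 w1 t1, A = p * p * A1 /\ A1 * B = w1 ^ 2 + w1 * t1 + 5 * t1 ^ 2.
Proof.
  intros Hp HpA [t1 ->] Hcop HAB.
  assert (Hpw : (p | w)).
  { assert (Hpww : (p | w * w)).
    { destruct HpA as [a1 Ha1]. exists (a1 * B - w * t1 - 5 * t1 ^ 2 * p).
      transitivity (A * B - w * (t1 * p) - 5 * (t1 * p) ^ 2);
        [rewrite HAB | rewrite Ha1]; ring. }
    destruct (prime_mult p Hp w w Hpww); assumption. }
  destruct Hpw as [w1 ->].
  assert (Hp2B : rel_prime (p * p) B).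
  { assert (HpB : rel_prime p B) by (eapply rel_prime_div; eauto).
    apply rel_prime_sym, rel_prime_mult; apply rel_prime_sym; exact HpB. }
  destruct (Gauss (p * p) B A) as [A1 ->]; [|exact Hp2B|].
  { exists (w1 ^ 2 + w1 * t1 + 5 * t1 ^ 2). rewrite Z.mul_comm, HAB. ring. }
  exists A1, w1, t1. split; [ring|].
  assert (Hp0 : p * p <> 0) by (pose proof (prime_ge_2 p Hp); nia).
  apply (Z.mul_cancel_l _ _ (p * p) Hp0).
  transitivity (A1 * (p * p) * B); [ring|]. rewrite HAB. ring.
Qed.

Lemma rep_coprime_factor A B w t : 0 < A -> rel_prime A B ->
  A * B = w ^ 2 + w * t + 5 * t ^ 2 -> principal_rep A.
Proof.
  revert w t. induction A as [A IH] using (well_founded_ind (Zwf_well_founded 0)).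
  intros w t HA Hcop HAB.
  destruct (Z.eq_dec (Z.gcd A t) 1) as [Hg|Hg].
  - exact (rep_factor_coprime_second A B w t HA (proj1 (Zgcd_1_rel_prime _ _) Hg) HAB).
  - assert (Hg0 : Z.gcd A t <> 0) by (intros H0; apply Z.gcd_eq_0_l in H0; lia).
    pose proof (Z.gcd_nonneg A t).
    destruct (exists_prime_divisor (Z.gcd A t) ltac:(lia)) as [p [Hp Hpg]].
    destruct (prime_square_descent p A B w t Hp) as [A1 [w1 [t1 [-> HA1]]]];
      [apply (Z.divide_trans _ _ _ Hpg), Z.gcd_divide_l
      |apply (Z.divide_trans _ _ _ Hpg), Z.gcd_divide_r | exact Hcop | exact HAB|].
    assert (Hpp : 4 <= p * p) by (pose proof (prime_ge_2 p Hp); nia).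
    assert (HA1p : 0 < A1) by (apply (Z.mul_pos_cancel_l (p * p)); lia).
    assert (HA1lt : Zwf 0 A1 (p * p * A1)) by (unfold Zwf; nia).
    destruct (IH A1 HA1lt w1 t1 HA1p) as [r [s Hrs]]; [|exact HA1|].
    + apply (rel_prime_div _ _ _ Hcop). exists (p * p). ring.
    + exists (p * r), (p * s). rewrite Hrs. ring.
Qed.

Lemma rep_coprime_pair P Q C w t : 0 < P -> 0 < Q -> rel_prime P Q ->
  rel_prime (P * Q) C -> P * Q * C = w ^ 2 + w * t + 5 * t ^ 2 ->
  principal_rep P /\ principal_rep Q.
Proof.
  intros HP HQ HPQ HPQC Hrep.
  assert (HPC : rel_prime P C) by (apply (rel_prime_div _ _ _ HPQC); exists Q; ring).
  assert (HQC : rel_prime Q C) by (apply (rel_prime_div _ _ _ HPQC); exists P; ring).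
  split.
  - apply (rep_coprime_factor P (Q * C) w t HP (rel_prime_mult _ _ _ HPQ HPC)).
    rewrite <- Hrep. ring.
  - apply (rep_coprime_factor Q (P * C) w t HQ
      (rel_prime_mult _ _ _ (rel_prime_sym _ _ HPQ) HQC)).
    rewrite <- Hrep. ring.
Qed.

Theorem theorem4 (n : nat) :
  (0 < n)%nat -> ~ is_pow2 n -> representable (ys n / 39) ->
  exists X Y r s v u : Z,
    X ^ 2 - 19 * 39 ^ 2 * Y ^ 2 = 1 /\
    X + 13 ^ 2 * Y = r ^ 2 + r * s + 5 * s ^ 2 /\
    X + 19 * 3 ^ 2 * Y = v ^ 2 + v * u + 5 * u ^ 2 /\
    Y > 0 /\
    ((r <> 1 /\ r <> -1) \/ s <> 0) /\
    (39 * (X + 13 ^ 2 * Y) * (X + 19 * 3 ^ 2 * Y) | ys n).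
Proof.
  intros Hn Hnot2 [_ [w [t Hwt]]]. fold (zs n) in Hwt.
  destruct (odd_part_decomposition n Hn) as [a [m [Hnm Hm]]].
  destruct (proj1 (Nat.odd_spec m) Hm) as [k Hk].
  assert (Hk0 : (0 < k)%nat) by (destruct k; [exfalso; apply Hnot2; exists a|]; lia).
  assert (Hmk : m = S (k + k)) by lia.
  pose proof (zs_pos k Hk0). pose proof (pell19_bounds k).
  set (X := xs k) in *. set (Y := zs k) in *.
  set (P := X + 13 ^ 2 * Y). set (Q := X + 19 * 3 ^ 2 * Y).
  assert (HmPQ : zs m = P * Q) by (rewrite Hmk; apply zs_odd_index).
  assert (Hodd : Z.odd (zs m) = true) by now rewrite zs_parity.
  destruct (zs_two_power_descent m a Hodd) as [C [HC HcopC]].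
  rewrite <- Hnm, HmPQ in HC. rewrite HmPQ in HcopC, Hodd.
  assert (HPQ : rel_prime P Q) by exact (odd_index_factors_coprime X Y (zs_norm k) Hodd).
  destruct (rep_coprime_pair P Q C w t ltac:(unfold P; lia) ltac:(unfold Q; lia)
    HPQ HcopC ltac:(rewrite <- Hwt, HC; ring)) as [[r [s Hrs]] [v [u Hvu]]].
  exists X, Y, r, s, v, u.
  split; [apply zs_norm|]. split; [exact Hrs|]. split; [exact Hvu|].
  split; [lia|]. split.
  - destruct (Z.eq_dec s 0) as [->|Hs]; [left | right; exact Hs].
    assert (P > 1) by (unfold P; lia). split; intros ->; lia.
  - fold P Q. rewrite ys_zs, HC. exists C. ring.
Qed.
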